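(* Fix the orthonormal basis $\{|0\rangle,|1\rangle\}$ of $\mathbb{C}^2$ and, for a Hermitian operator $X$ on $\mathbb{C}^2$, let $C(X):=\big\|X-\sum_{i\in\{0,1\}}\langle i|X|i\rangle\,|i\rangle\langle i|\big\|_1$ (trace norm). For every $\varepsilon>0$ there exist a finite set $\mathcal{S}$ of qubit density operators and a finite set of qubit POVMs, with $\mathcal{E}$ the set of all their POVM elements, such that: (i) $C(X)\le\varepsilon$ for every $X\in\mathcal{S}\cup\mathcal{E}$; (ii) $C(\rho)>0$ for some $\rho\in\mathcal{S}$ and $C(E)>0$ for some $E\in\mathcal{E}$; and (iii) the prepare-and-measure scenario $(\mathcal{S},\mathcal{E})$ admits no noncontextual ontological model.
   Context: A noncontextual ontological model for a quantum prepare-and-measure scenario consisting of a finite set $\mathcal{S}$ of density operators and a finite set $\mathcal{E}$ of effects (the elements of finitely many POVMs) is: a finite set $\Lambda$; a map $\rho\mapsto\mu_\rho$ from the convex hull of $\mathcal{S}$ to probability distributions on $\Lambda$ that is convex-linear (so it depends only on the operator, not on how it is decomposed as a mixture); and a map $E\mapsto\xi_E$ from the convex hull of $\mathcal{E}\cup\{0,\mathbb{1}\}$ to functions $\Lambda\to[0,1]$ that is convex-linear with $\xi_{\mathbb{1}}\equiv 1$; such that $\mathrm{Tr}(E\rho)=\sum_{\lambda\in\Lambda}\xi_E(\lambda)\mu_\rho(\lambda)$ for all $\rho\in\mathcal{S}$, $E\in\mathcal{E}$. (Equivalently, the associated GPT fragment is simplex-embeddable.) *)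

From HB Require Import structures.
From mathcomp Require Import all_boot all_order all_algebra.
From mathcomp Require Import sesquilinear spectral.
From mathcomp Require Import complex.
From mathcomp Require Import reals.
Set Implicit Arguments. Unset Strict Implicit. Unset Printing Implicit Defensive.
Import Order.TTheory GRing.Theory Num.Theory.
Local Open Scope ring_scope.
Local Open Scope sesquilinear_scope.
Local Open Scope complex_scope.

Section Qubit.
Variable R : realType.
Local Notation C := (R[i]).
Local Notation M := ('M[C]_2).

Definition adj m n (A : 'M[C]_(m, n)) : 'M[C]_(n, m) := (A ^t Num.conj_op).

Definition hermitian (A : M) : Prop := adj A = A.

Definition psd (A : M) : Prop :=
  hermitian A /\ forall v : 'cV[C]_2, 0 <= ((adj v) *m A *m v) 0 0.

Definition density (A : M) : Prop := psd A /\ \tr A = 1.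

Definition povm (P : seq M) : Prop :=
  (forall E, E \in P -> psd E) /\ \sum_(E <- P) E = 1%:M.

(* Trace norm of a Hermitian (more generally normal) matrix: the sum of the
   absolute values of its eigenvalues, read off its spectral (Schur)
   decomposition A = U^-1 diag(d) U with U unitary. *)
Definition trnorm (A : M) : R :=
  complex.Re (\sum_(j < 2) `|spectral_diag A 0 j|).

Definition dephase (X : M) : M := \matrix_(i, j) (if i == j then X i j else 0).

Definition coh (X : M) : R := trnorm (X - dephase X).

Definition in_hull (s : seq M) (A : M) : Prop :=
  exists w : 'I_(size s) -> R,
    (forall k, 0 <= w k) /\ \sum_k w k = 1 /\
    A = \sum_k (w k)%:C *: s`_k.

Definition nc_model (S E : seq M) : Prop :=
  exists (L : finType) (mu : M -> L -> R) (xi : M -> L -> R),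
    (forall rho, in_hull S rho ->
       (forall l, 0 <= mu rho l) /\ \sum_l mu rho l = 1) /\
    (forall rho1 rho2 (p : R), in_hull S rho1 -> in_hull S rho2 ->
       0 <= p <= 1 ->
       forall l, mu (p%:C *: rho1 + (1 - p)%:C *: rho2) l
                 = p * mu rho1 l + (1 - p) * mu rho2 l) /\
    (forall F, in_hull (0 :: 1%:M :: E) F ->
       forall l, 0 <= xi F l <= 1) /\
    (forall F1 F2 (p : R), in_hull (0 :: 1%:M :: E) F1 ->
       in_hull (0 :: 1%:M :: E) F2 -> 0 <= p <= 1 ->
       forall l, xi (p%:C *: F1 + (1 - p)%:C *: F2) l
                 = p * xi F1 l + (1 - p) * xi F2 l) /\
    (forall l, xi 1%:M l = 1) /\
    (forall rho F, rho \in S -> F \in E ->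
       \tr (F *m rho) = (\sum_l xi F l * mu rho l)%:C).
End Qubit.

From HB Require Import structures.
From mathcomp Require Import all_boot all_order all_algebra.
From mathcomp Require Import sesquilinear spectral complex reals.
From mathcomp Require Import ring lra.
Set Implicit Arguments. Unset Strict Implicit. Unset Printing Implicit Defensive.
Import Order.TTheory GRing.Theory Num.Theory.
Local Open Scope ring_scope.
Local Open Scope complex_scope.
Local Open Scope sesquilinear_scope.

(* The states are the real pure states P t, the projector onto the line through (1, t),
   for t in {-b, 0, b/2, b}, and the measurements are {P t, 1 - P t} for t in {-b, 0, b};
   every one of these operators has coherence at most 2b.  In a noncontextual model the
   outcome P(-b) is certain on the ontic support of P(-b), so the response to the zero
   effect vanishes there, because (P + (1 - P))/2 = (0 + 1)/2.  The mixtures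
   p P(-b) + (1-p) P(b/2) and q P(0) + (1-q) P(b) coincide, so the support of P(-b) lies in
   the union of those of P(0) and P(b).  It cannot meet the support of P(b): there the
   decomposition (P(-b) + P(b))/2 = lam P(0) + (1 - lam) 1/2 with 0 < lam < 1 would give
   1 <= lam + (1 - lam)/2.  Hence P(0) has response 1 on the support of P(-b), which forces
   Tr(P(0) P(-b)) = 1, whereas it equals 1/(1 + b^2). *)

Lemma sum_ord2 (V : nmodType) (F : 'I_2 -> V) : \sum_j F j = F 0 + F 1.
Proof. by rewrite big_ord_recr big_ord1; congr (F _ + F _); apply: val_inj. Qed.

Lemma ord2P (i : 'I_2) : i = 0 \/ i = 1.
Proof. by case: i => [[|[|//]] ?]; [left|right]; apply: val_inj. Qed.

Lemma matrix2P (T : Type) (A B : 'M[T]_2) :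
  A 0 0 = B 0 0 -> A 0 1 = B 0 1 -> A 1 0 = B 1 0 -> A 1 1 = B 1 1 -> A = B.
Proof.
move=> e00 e01 e10 e11; apply/matrixP => i j.
by case: (ord2P i) => ->; case: (ord2P j) => ->.
Qed.

Section SpectralTrace.
Variables (C : numClosedFieldType) (n : nat) (A : 'M[C]_n).
Hypothesis normalA : A \is normalmx.

Lemma mxtrace_spectral_diag : \tr A = \sum_j spectral_diag A 0 j.
Proof.
have Pu := spectral_unit A; rewrite {1}(orthomx_spectralP normalA).
by rewrite mxtrace_mulC mulmxA mulmxV // mul1mx mxtrace_diag.
Qed.

Lemma mxtrace_sqr_spectral_diag : \tr (A *m A) = \sum_j spectral_diag A 0 j ^+ 2.
Proof.
have Pu := spectral_unit A; rewrite {1 2}(orthomx_spectralP normalA).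
rewrite -!mulmxA mulKVmx // mxtrace_mulC -!mulmxA mulmxV // mulmx1.
by rewrite mulmx_diag mxtrace_diag; apply: eq_bigr => j _; rewrite mxE.
Qed.

End SpectralTrace.

Section RealSymmetric.
Variable R : realType.
Local Notation C := (R[i]).
Local Notation M := ('M[C]_2).

Lemma conjC_real (a : R) : (a%:C)^*%R = a%:C :> C.
Proof. exact: conjc_real. Qed.

Definition sym2mx (x y z : R) : M :=
  \matrix_(i, j) (if i == j then if i == 0 then x else z else y)%:C.

Lemma sym2mxD x y z x' y' z' :
  sym2mx x y z + sym2mx x' y' z' = sym2mx (x + x') (y + y') (z + z').
Proof. by apply: matrix2P; rewrite !mxE /= rmorphD. Qed.

Lemma sym2mxB x y z x' y' z' :
  sym2mx x y z - sym2mx x' y' z' = sym2mx (x - x') (y - y') (z - z').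
Proof. by apply: matrix2P; rewrite !mxE /= rmorphB. Qed.

Lemma sym2mxZ a x y z : a%:C *: sym2mx x y z = sym2mx (a * x) (a * y) (a * z).
Proof. by apply: matrix2P; rewrite !mxE /= rmorphM. Qed.

Lemma sym2mx1 : 1%:M = sym2mx 1 0 1.
Proof. by apply: matrix2P; rewrite !mxE. Qed.

Lemma mxtrace_sym2mx x y z : \tr (sym2mx x y z) = (x + z)%:C.
Proof. by rewrite /mxtrace sum_ord2 !mxE rmorphD. Qed.

Lemma mxtrace_sym2mxM x y z x' y' z' :
  \tr (sym2mx x y z *m sym2mx x' y' z') = (x * x' + 2 * y * y' + z * z')%:C.
Proof.
rewrite /mxtrace sum_ord2 !mxE !sum_ord2 !mxE /=.
by rewrite -!rmorphM -!rmorphD; congr (_%:C); ring.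
Qed.

Lemma adj_sym2mx x y z : adj (sym2mx x y z) = sym2mx x y z.
Proof. by apply: matrix2P; rewrite !mxE /= conjC_real. Qed.

Lemma dephase_sym2mx x y z : dephase (sym2mx x y z) = sym2mx x 0 z.
Proof. by apply: matrix2P; rewrite !mxE. Qed.

Lemma psd_sym2mx_rank1 (k a b : R) : 0 <= k ->
  psd (sym2mx (k * a ^+ 2) (k * a * b) (k * b ^+ 2)).
Proof.
move=> k_ge0; split=> [|v]; first exact: adj_sym2mx.
set s := a%:C * v 0 0 + b%:C * v 1 0.
have -> : (adj v *m sym2mx (k * a ^+ 2) (k * a * b) (k * b ^+ 2) *m v) 0 0 =
          k%:C * (s * s^*%R).
  rewrite !mxE sum_ord2 !mxE !sum_ord2 !mxE /= /s rmorphD !rmorphM /=.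
  by rewrite !conjC_real; ring.
by rewrite mulr_ge0 ?ler0c ?mul_conjC_ge0.
Qed.

Lemma normc_real (a : R) : `|a%:C| = `|a|%:C.
Proof. by rewrite normc_def /= expr0n addr0 sqrtr_sqr. Qed.

Lemma trnorm_sym2mx_offdiag y : trnorm (sym2mx 0 y 0) = 2 * `|y|.
Proof.
have normalA : sym2mx 0 y 0 \is normalmx.
  by apply/normalmxP; rewrite [_ ^t _]adj_sym2mx.
have := mxtrace_sqr_spectral_diag normalA.
have := mxtrace_spectral_diag normalA.
(* The eigenvalues sum to tr A = 0 and their squares to tr A^2 = 2 y^2: they are y and -y. *)
rewrite /trnorm mxtrace_sym2mx mxtrace_sym2mxM !sum_ord2.
set d0 := spectral_diag _ 0 0; set d1 := spectral_diag _ 0 1.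
rewrite addr0 => /esym/eqP; rewrite addr_eq0 => /eqP -> tr2.
have : (d1 - y%:C) * (d1 + y%:C) * 2 = 0.
  move: tr2; rewrite !rmorphD !rmorphM rmorph0 rmorph_nat /=.
  by move/esym/eqP; rewrite -subr_eq0 => /eqP <-; ring.
rewrite normrN; move/eqP; rewrite mulf_eq0 pnatr_eq0 orbF mulf_eq0 subr_eq0 addr_eq0.
by case/orP=> /eqP ->; rewrite ?normrN normc_real -rmorphD /=; ring.
Qed.

Lemma coh_sym2mx x y z : coh (sym2mx x y z) = 2 * `|y|.
Proof. by rewrite /coh dephase_sym2mx sym2mxB !subrr subr0 trnorm_sym2mx_offdiag. Qed.

End RealSymmetric.

Section LineProjector.
Variable R : realType.
Local Notation C := (R[i]).
Local Notation M := ('M[C]_2).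

Definition proj_line (t : R) : M :=
  sym2mx (1 + t ^+ 2)^-1 ((1 + t ^+ 2)^-1 * t) ((1 + t ^+ 2)^-1 * t ^+ 2).

Lemma add1_sqr_gt0 (t : R) : 0 < 1 + t ^+ 2.
Proof. by rewrite ltr_pwDl // sqr_ge0. Qed.

Lemma add1_sqr_neq0 (t : R) : 1 + t ^+ 2 != 0.
Proof. by rewrite gt_eqF // add1_sqr_gt0. Qed.

Lemma psd_proj_line t : psd (proj_line t).
Proof.
have -> : proj_line t =
    sym2mx ((1 + t ^+ 2)^-1 * 1 ^+ 2) ((1 + t ^+ 2)^-1 * 1 * t) ((1 + t ^+ 2)^-1 * t ^+ 2).
  by rewrite expr1n mulr1.
by apply: psd_sym2mx_rank1; rewrite invr_ge0 ltW // add1_sqr_gt0.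
Qed.

Lemma density_proj_line t : density (proj_line t).
Proof.
split; first exact: psd_proj_line.
rewrite mxtrace_sym2mx -[RHS]/(1%:C); congr (_%:C).
by field; rewrite ?add1_sqr_neq0.
Qed.

Lemma povm_proj_line t : povm [:: proj_line t; 1%:M - proj_line t].
Proof.
split; last by rewrite !big_cons big_nil addr0 addrC subrK.
move=> E; rewrite !inE => /orP[] /eqP ->; first exact: psd_proj_line.
have -> : 1%:M - proj_line t = sym2mx ((1 + t ^+ 2)^-1 * t ^+ 2)
    ((1 + t ^+ 2)^-1 * t * (-1)) ((1 + t ^+ 2)^-1 * (-1) ^+ 2).
  by rewrite sym2mx1 sym2mxB; congr sym2mx; field; rewrite ?add1_sqr_neq0.
by apply: psd_sym2mx_rank1; rewrite invr_ge0 ltW // add1_sqr_gt0.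
Qed.

Lemma coh_proj_line t : coh (proj_line t) = 2 * `|t| / (1 + t ^+ 2).
Proof.
rewrite coh_sym2mx normrM ger0_norm ?invr_ge0 ?ltW ?add1_sqr_gt0 //.
by rewrite [X in 2 * X]mulrC mulrA.
Qed.

Lemma coh_compl_proj_line t : coh (1%:M - proj_line t) = coh (proj_line t).
Proof. by rewrite sym2mx1 sym2mxB !coh_sym2mx sub0r normrN. Qed.

Lemma coh_proj_line_le t : coh (proj_line t) <= 2 * `|t|.
Proof.
rewrite coh_proj_line ler_pdivrMr ?add1_sqr_gt0 // ler_peMr ?mulr_ge0 //.
by rewrite lerDl sqr_ge0.
Qed.

Lemma mxtrace_proj_lineM u v : \tr (proj_line u *m proj_line v) =
  ((1 + u * v) ^+ 2 / ((1 + u ^+ 2) * (1 + v ^+ 2)))%:C.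
Proof.
rewrite mxtrace_sym2mxM; congr (_%:C).
by field; rewrite ?add1_sqr_neq0.
Qed.

Lemma mxtrace_proj_line_sqr t : \tr (proj_line t *m proj_line t) = 1.
Proof.
rewrite mxtrace_proj_lineM -[RHS]/(1%:C); congr (_%:C).
by field; rewrite ?add1_sqr_neq0.
Qed.

Lemma mxtrace_compl_proj_lineM t : \tr ((1%:M - proj_line t) *m proj_line t) = 0.
Proof.
rewrite sym2mx1 sym2mxB mxtrace_sym2mxM -[RHS]/(0%:C); congr (_%:C).
by field; rewrite ?add1_sqr_neq0.
Qed.

Local Notation P := proj_line.

(* P t has Bloch vector (2t, 1 - t^2)/(1 + t^2), which runs monotonically along the unit
   circle, so the chords [P(-b), P(b/2)] and [P 0, P b] cross; the two weights locate the
   crossing point on each chord. *)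
Lemma proj_line_chords_cross (b : R) :
  ((1 + b ^+ 2) / (3 * (3 + b ^+ 2)))%:C *: P (- b)
    + (1 - (1 + b ^+ 2) / (3 * (3 + b ^+ 2)))%:C *: P (b / 2)
  = (2 / (3 + b ^+ 2))%:C *: P 0 + (1 - 2 / (3 + b ^+ 2))%:C *: P b.
Proof.
have b3_neq0 : 3 + b ^+ 2 != 0 by rewrite gt_eqF // ltr_pwDl // sqr_ge0.
have b4_neq0 : 4 + b ^+ 2 != 0 by rewrite gt_eqF // ltr_pwDl // sqr_ge0.
rewrite /proj_line !sym2mxZ !sym2mxD; congr sym2mx; field;
  by rewrite b3_neq0 b4_neq0 ?add1_sqr_neq0.
Qed.

Lemma proj_line_symmetric_mix (b : R) :
  (1 / 2)%:C *: P (- b) + (1 - 1 / 2)%:C *: P b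
  = ((1 - b ^+ 2) / (1 + b ^+ 2))%:C *: P 0
    + (1 - (1 - b ^+ 2) / (1 + b ^+ 2))%:C *: ((1 / 2)%:C *: 0 + (1 - 1 / 2)%:C *: 1%:M).
Proof.
rewrite scaler0 add0r sym2mx1 /proj_line !sym2mxZ !sym2mxD; congr sym2mx; field;
  by rewrite ?add1_sqr_neq0.
Qed.

End LineProjector.

Section ConvexHull.
Variable R : realType.
Local Notation M := ('M[R[i]]_2).

Lemma in_hull_mem (s : seq M) A : A \in s -> in_hull s A.
Proof.
move=> As; pose k := Ordinal (etrans (index_mem A s) As).
exists (fun j => (j == k)%:R); split; first by move=> j; rewrite ler0n.
split; first by rewrite (bigD1 k) //= eqxx big1 ?addr0 // => j /negbTE->.
rewrite (bigD1 k) //= eqxx scale1r nth_index // big1 ?addr0 // => j /negbTE->.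
by rewrite scale0r.
Qed.

Lemma in_hull_mix (s : seq M) A B (p : R) : in_hull s A -> in_hull s B ->
  0 <= p <= 1 -> in_hull s (p%:C *: A + (1 - p)%:C *: B).
Proof.
move=> [wA [wA_ge0 [wA_sum ->]]] [wB [wB_ge0 [wB_sum ->]]] /andP[p_ge0 p_le1].
exists (fun j => p * wA j + (1 - p) * wB j); split.
  by move=> j; rewrite addr_ge0 // mulr_ge0 // subr_ge0.
split; first by rewrite big_split /= -!mulr_sumr wA_sum wB_sum !mulr1 addrC subrK.
rewrite !scaler_sumr -big_split /=; apply: eq_bigr => j _.
by rewrite !scalerA -scalerDl -!rmorphM -rmorphD.
Qed.

End ConvexHull.

Section ResponseOnSupport.
Variables (R : realType) (L : finType) (mu : L -> R).
Hypothesis mu_ge0 : forall l, 0 <= mu l.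

Lemma response_eq0_on_support (xi : L -> R) : (forall l, 0 <= xi l) ->
  \sum_l xi l * mu l = 0 -> forall l, 0 < mu l -> xi l = 0.
Proof.
move=> xi_ge0 sum0 l mu_gt0.
have xi_mu_ge0 k : true -> 0 <= xi k * mu k by rewrite mulr_ge0.
have /eqP := psumr_eq0P xi_mu_ge0 sum0 (i := l) isT.
by rewrite mulf_eq0 (gt_eqF mu_gt0) orbF => /eqP.
Qed.

Lemma response_eq1_on_support (xi : L -> R) : \sum_l mu l = 1 -> (forall l, xi l <= 1) ->
  \sum_l xi l * mu l = 1 -> forall l, 0 < mu l -> xi l = 1.
Proof.
move=> mu_sum1 xi_le1 sum1 l mu_gt0; apply/eqP; rewrite eq_sym -subr_eq0; apply/eqP.
apply: (response_eq0_on_support (xi := fun k => 1 - xi k) _ _ mu_gt0).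
  by move=> k; rewrite subr_ge0.
by under eq_bigr do rewrite mulrBl mul1r; rewrite sumrB mu_sum1 sum1 subrr.
Qed.

Lemma sum_response_eq1_on_support (xi : L -> R) :
  (forall l, 0 < mu l -> xi l = 1) -> \sum_l xi l * mu l = \sum_l mu l.
Proof.
move=> xi1_supp; apply: eq_bigr => l _.
have [/xi1_supp -> | mu_le0] := ltrP 0 (mu l); first by rewrite mul1r.
suff -> : mu l = 0 by rewrite mulr0.
by apply/le_anti; rewrite mu_le0 mu_ge0.
Qed.

End ResponseOnSupport.

Lemma convex_combination_pos (R : realDomainType) (p q a a' c c' : R) :
  0 < p <= 1 -> 0 <= q <= 1 -> 0 < a -> 0 <= a' -> 0 <= c -> 0 <= c' ->
  p * a + (1 - p) * a' = q * c + (1 - q) * c' -> 0 < c \/ 0 < c'.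
Proof.
move=> /andP[p_gt0 p_le1] /andP[q_ge0 q_le1] a_gt0 a'_ge0 c_ge0 c'_ge0.
case: (ltrP 0 c) => [|c_le0]; first by left.
case: (ltrP 0 c') => [|c'_le0]; first by right.
by move=> eq_mix; exfalso; nra.
Qed.

Section NoncontextualModel.
Variables (R : realType) (S E : seq 'M[R[i]]_2) (L : finType).
Variables mu xi : 'M[R[i]]_2 -> L -> R.
Local Notation effect_hull := (in_hull (0 :: 1%:M :: E)).

Hypothesis mu_distr : forall rho, in_hull S rho ->
  (forall l, 0 <= mu rho l) /\ \sum_l mu rho l = 1.
Hypothesis mu_convex : forall rho1 rho2 (p : R), in_hull S rho1 -> in_hull S rho2 ->
  0 <= p <= 1 -> forall l,
  mu (p%:C *: rho1 + (1 - p)%:C *: rho2) l = p * mu rho1 l + (1 - p) * mu rho2 l.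
Hypothesis xi_range : forall F, effect_hull F -> forall l, 0 <= xi F l <= 1.
Hypothesis xi_convex : forall F1 F2 (p : R), effect_hull F1 -> effect_hull F2 ->
  0 <= p <= 1 -> forall l,
  xi (p%:C *: F1 + (1 - p)%:C *: F2) l = p * xi F1 l + (1 - p) * xi F2 l.
Hypothesis xi1 : forall l, xi 1%:M l = 1.
Hypothesis born_rule : forall rho F, rho \in S -> F \in E ->
  \tr (F *m rho) = (\sum_l xi F l * mu rho l)%:C.

Lemma effect_hull_mem F : F \in E -> effect_hull F.
Proof. by move=> EF; apply: in_hull_mem; rewrite !inE EF !orbT. Qed.

Lemma effect_hull0 : effect_hull 0.
Proof. by apply: in_hull_mem; rewrite mem_head. Qed.

Lemma effect_hull1 : effect_hull 1%:M.
Proof. by apply: in_hull_mem; rewrite !inE eqxx orbT. Qed.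

Lemma mu_ge0 rho l : rho \in S -> 0 <= mu rho l.
Proof. by move=> /in_hull_mem /mu_distr[]. Qed.

Lemma xi_eq1_on_support rho F l : rho \in S -> F \in E ->
  \tr (F *m rho) = 1 -> 0 < mu rho l -> xi F l = 1.
Proof.
move=> Srho EF; rewrite born_rule // -[RHS]/(1%:C) => /complexI sum1.
have [mu_rho_ge0 mu_rho_sum1] := mu_distr (in_hull_mem Srho).
apply: (response_eq1_on_support mu_rho_ge0 mu_rho_sum1 _ sum1) => k.
by case/andP: (xi_range (effect_hull_mem EF) k).
Qed.

Lemma xi_eq0_on_support rho F l : rho \in S -> F \in E ->
  \tr (F *m rho) = 0 -> 0 < mu rho l -> xi F l = 0.
Proof.
move=> Srho EF; rewrite born_rule // -[RHS]/(0%:C) => /complexI sum0.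
have xi_ge0 k : 0 <= xi F k by case/andP: (xi_range (effect_hull_mem EF) k).
have [mu_rho_ge0 _] := mu_distr (in_hull_mem Srho).
exact: (response_eq0_on_support mu_rho_ge0 xi_ge0 sum0).
Qed.

Lemma mu_support_mix rho1 rho2 sigma1 sigma2 p q l :
  rho1 \in S -> rho2 \in S -> sigma1 \in S -> sigma2 \in S ->
  0 < p <= 1 -> 0 <= q <= 1 ->
  p%:C *: rho1 + (1 - p)%:C *: rho2 = q%:C *: sigma1 + (1 - q)%:C *: sigma2 ->
  0 < mu rho1 l -> 0 < mu sigma1 l \/ 0 < mu sigma2 l.
Proof.
move=> Srho1 Srho2 Ssigma1 Ssigma2 p01 q01 eq_mix mu_gt0.
have p01w : 0 <= p <= 1 by case/andP: p01 => /ltW -> ->.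
apply: (convex_combination_pos p01 q01 mu_gt0 (mu_ge0 l Srho2)
  (mu_ge0 l Ssigma1) (mu_ge0 l Ssigma2)).
have := mu_convex (in_hull_mem Srho1) (in_hull_mem Srho2) p01w l.
by rewrite eq_mix (mu_convex (in_hull_mem Ssigma1) (in_hull_mem Ssigma2) q01) => ->.
Qed.

Lemma xi0_eq0_on_support rho F l : rho \in S -> F \in E -> 1%:M - F \in E ->
  \tr (F *m rho) = 1 -> \tr ((1%:M - F) *m rho) = 0 -> 0 < mu rho l -> xi 0 l = 0.
Proof.
move=> Srho EF EF' trF trF' mu_gt0.
have half01 : 0 <= (1 / 2 : R) <= 1 by apply/andP; split; lra.
have := xi_convex (effect_hull_mem EF) (effect_hull_mem EF') half01 l.
have -> : (1 / 2)%:C *: F + (1 - 1 / 2)%:C *: (1%:M - F)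
          = (1 / 2)%:C *: 0 + (1 - 1 / 2)%:C *: 1%:M :> 'M_2.
  have -> : 1 - 1 / 2 = 1 / 2 :> R by lra.
  by rewrite scaler0 add0r -scalerDr addrC subrK.
rewrite (xi_convex effect_hull0 effect_hull1 half01) xi1.
by rewrite (xi_eq1_on_support Srho EF) ?(xi_eq0_on_support Srho EF') //; lra.
Qed.

Section LineProjectorScenario.
Variable b : R.
Hypotheses (b_gt0 : 0 < b) (b_lt1 : b < 1).
Local Notation P := (@proj_line R).
Hypothesis states_sub : {subset [:: P (- b); P 0; P (b / 2); P b] <= S}.
Hypothesis effects_sub : {subset [:: P (- b); 1%:M - P (- b); P 0; P b] <= E}.

Let S_minus : P (- b) \in S. Proof. by apply: states_sub; rewrite !inE eqxx. Qed.
Let S_zero : P 0 \in S. Proof. by apply: states_sub; rewrite !inE eqxx !orbT. Qed.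
Let S_half : P (b / 2) \in S. Proof. by apply: states_sub; rewrite !inE eqxx !orbT. Qed.
Let S_plus : P b \in S. Proof. by apply: states_sub; rewrite !inE eqxx !orbT. Qed.
Let E_minus : P (- b) \in E. Proof. by apply: effects_sub; rewrite !inE eqxx. Qed.
Let E_minus_compl : 1%:M - P (- b) \in E.
Proof. by apply: effects_sub; rewrite !inE eqxx !orbT. Qed.
Let E_zero : P 0 \in E. Proof. by apply: effects_sub; rewrite !inE eqxx !orbT. Qed.
Let E_plus : P b \in E. Proof. by apply: effects_sub; rewrite !inE eqxx !orbT. Qed.

Lemma xi0_eq0_on_minus_support l : 0 < mu (P (- b)) l -> xi 0 l = 0.
Proof.
apply: (xi0_eq0_on_support S_minus E_minus E_minus_compl).
  exact: mxtrace_proj_line_sqr.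
exact: mxtrace_compl_proj_lineM.
Qed.

Lemma minus_plus_supports_disjoint l :
  0 < mu (P (- b)) l -> 0 < mu (P b) l -> False.
Proof.
move=> mu_minus_gt0 mu_plus_gt0.
set lam := (1 - b ^+ 2) / (1 + b ^+ 2).
have b2_gt0 : 0 < b ^+ 2 by rewrite exprn_gt0.
have b2_lt1 : b ^+ 2 < 1 by rewrite expr_lt1 // ltW.
have lam_gt0 : 0 < lam by rewrite divr_gt0 ?subr_gt0 ?add1_sqr_gt0.
have lam_lt1 : lam < 1 by rewrite ltr_pdivrMr ?add1_sqr_gt0 // mul1r; lra.
have lam01 : 0 <= lam <= 1 by rewrite !ltW.
have half01 : 0 <= (1 / 2 : R) <= 1 by apply/andP; split; lra.
have := xi_convex (effect_hull_mem E_minus) (effect_hull_mem E_plus) half01 l.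
rewrite proj_line_symmetric_mix -/lam.
rewrite (xi_convex (effect_hull_mem E_zero) _ lam01); last first.
  exact: in_hull_mix effect_hull0 effect_hull1 half01.
rewrite (xi_convex effect_hull0 effect_hull1 half01) xi1.
rewrite (xi0_eq0_on_minus_support mu_minus_gt0).
rewrite (xi_eq1_on_support S_minus E_minus _ mu_minus_gt0) ?mxtrace_proj_line_sqr //.
rewrite (xi_eq1_on_support S_plus E_plus _ mu_plus_gt0) ?mxtrace_proj_line_sqr //.
have /andP[_ xi_le1] := xi_range (effect_hull_mem E_zero) l.
by move=> eq_xi; nra.
Qed.

Lemma minus_support_sub_zero_support l : 0 < mu (P (- b)) l -> 0 < mu (P 0) l.
Proof.
move=> mu_minus_gt0.
have b3_gt0 : 0 < 3 + b ^+ 2 by nra.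
have p01 : 0 < (1 + b ^+ 2) / (3 * (3 + b ^+ 2)) <= 1.
  by rewrite divr_gt0 ?ler_pdivrMr ?mul1r ?add1_sqr_gt0 ?mulr_gt0 //; nra.
have q01 : 0 <= 2 / (3 + b ^+ 2) <= 1.
  by rewrite divr_ge0 ?ler_pdivrMr ?mul1r ?ltW //; nra.
have [//|mu_plus_gt0] := mu_support_mix S_minus S_half S_zero S_plus p01 q01
  (proj_line_chords_cross b) mu_minus_gt0.
by case: (minus_plus_supports_disjoint mu_minus_gt0 mu_plus_gt0).
Qed.

Lemma line_scenario_false : False.
Proof.
have [_ mu_sum1] := mu_distr (in_hull_mem S_minus).
have := born_rule S_minus E_zero.
rewrite sum_response_eq1_on_support ?mu_sum1; last first.
- move=> l /minus_support_sub_zero_support mu_zero_gt0.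
  by apply: (xi_eq1_on_support S_zero E_zero _ mu_zero_gt0); rewrite mxtrace_proj_line_sqr.
- by move=> l; apply: mu_ge0.
rewrite mxtrace_proj_lineM => /complexI.
rewrite mul0r addr0 expr1n expr0n addr0 !mul1r sqrrN => /eqP.
by rewrite invr_eq1 -subr_eq0 [_ - 1]addrC addKr sqrf_eq0 gt_eqF.
Qed.

End LineProjectorScenario.

End NoncontextualModel.

Lemma proj_line_scenario_contextual (R : realType) (b : R) (S E : seq 'M[R[i]]_2) :
  0 < b -> b < 1 ->
  {subset [:: proj_line (- b); proj_line 0; proj_line (b / 2); proj_line b] <= S} ->
  {subset [:: proj_line (- b); 1%:M - proj_line (- b); proj_line 0; proj_line b] <= E} ->
  ~ nc_model S E.
Proof.
move=> b_gt0 b_lt1 states_sub effects_sub.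
move=> [L [mu [xi [mu_distr [mu_convex [xi_range [xi_convex [xi1 born_rule]]]]]]]].
exact: (line_scenario_false mu_distr mu_convex xi_range xi_convex xi1 born_rule
  b_gt0 b_lt1 states_sub effects_sub).
Qed.

Theorem mainTheorem1 (R : realType) (eps : R) (heps : 0 < eps) :
  exists (S : seq 'M[R[i]]_2) (Ps : seq (seq 'M[R[i]]_2)),
    (forall rho, rho \in S -> density rho) /\
    (forall P, P \in Ps -> povm P) /\
    (forall X, X \in S ++ flatten Ps -> coh X <= eps) /\
    (exists2 rho, rho \in S & 0 < coh rho) /\
    (exists2 E, E \in flatten Ps & 0 < coh E) /\
    ~ nc_model S (flatten Ps).
Proof.
pose m := Num.min eps 1.
have m_gt0 : 0 < m by rewrite lt_min heps ltr01.
have m_le1 : m <= 1 by rewrite ge_min lexx orbT.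
have m_le_eps : m <= eps by rewrite ge_min lexx.
pose b := m / 4.
have b_gt0 : 0 < b by rewrite divr_gt0.
have b_lt1 : b < 1 by rewrite /b; lra.
have coh_le t : `|t| <= b -> coh (proj_line t) <= eps.
  by move=> t_le; apply: (le_trans (coh_proj_line_le t)); rewrite /b in t_le; lra.
have coh_pos : 0 < coh (proj_line b).
  by rewrite coh_proj_line divr_gt0 ?add1_sqr_gt0 // mulr_gt0 // normr_gt0 gt_eqF.
exists [:: proj_line (- b); proj_line 0; proj_line (b / 2); proj_line b].
exists [seq [:: proj_line t; 1%:M - proj_line t] | t <- [:: - b; 0; b]].
split; first by move=> rho; rewrite !inE => /or4P[] /eqP ->; exact: density_proj_line.
split; first by move=> P /mapP[t _ ->]; exact: povm_proj_line.
split.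
  apply/allP; rewrite /= !coh_compl_proj_line.
  by rewrite !coh_le ?normrN ?normr0 ?gtr0_norm ?divr_gt0 //; lra.
split; first by exists (proj_line b); rewrite ?inE ?eqxx ?orbT.
split; first by exists (proj_line b); rewrite /= ?inE ?eqxx ?orbT.
apply: (proj_line_scenario_contextual b_gt0 b_lt1 (fun _ => id)) => X.
by rewrite !inE => /or4P[] /eqP ->; rewrite /= eqxx ?orbT.
Qed.
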